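(* Let $G$ be a finitely presented residually finite group and $g_1,\ldots,g_m$ non-trivial elements of $G$. For $k\in\mathbb{N}$ let $H_k$ be the normal subgroup of $G$ generated by $g_1^k,\ldots,g_m^k$. If $rdef(G)>1$, then $rdef(G/H_k)>1$ for infinitely many natural numbers $k$.
   Context: Residual deficiency: for a finitely presented group $K$ and a finite presentation $Q=\langle X\mid R\rangle$ of $K$ with $X$ freely generating $F_n$ and $\varphi:F_n\to K$ canonical, write $R=\{u_1^{m_1},\ldots,u_s^{m_s}\}$ with $u_i$ not proper powers in $F_n$; let $R_K$ be the intersection of all finite index subgroups of $K$ and $k_i$ the order of $\varphi(u_i)R_K$ in $K/R_K$; $rdef(Q)=n-\sum 1/k_i$, and $rdef(K)$ is the supremum of $rdef(Q)$ over all finite presentations of $K$. *)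

From Stdlib Require Import Reals List Arith Lia Setoid Morphisms ClassicalEpsilon.
From Coquelicot Require Import Rbar Lub.
Import ListNotations.
Open Scope R_scope.

Record Group := mkGroup {
  carrier :> Type;
  geq : carrier -> carrier -> Prop;
  gop : carrier -> carrier -> carrier;
  gid : carrier;
  ginv : carrier -> carrier;
  geq_refl : forall x, geq x x;
  geq_sym : forall x y, geq x y -> geq y x;
  geq_trans : forall x y z, geq x y -> geq y z -> geq x z;
  gop_compat : forall x x' y y', geq x x' -> geq y y' -> geq (gop x y) (gop x' y');
  ginv_compat : forall x x', geq x x' -> geq (ginv x) (ginv x');
  gop_assoc : forall x y z, geq (gop x (gop y z)) (gop (gop x y) z);
  gop_id_l : forall x, geq (gop gid x) x;
  gop_id_r : forall x, geq (gop x gid) x;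
  gop_inv_l : forall x, geq (gop (ginv x) x) gid;
  gop_inv_r : forall x, geq (gop x (ginv x)) gid }.

Arguments geq {G} : rename.
Arguments gop {G} : rename.
Arguments ginv {G} : rename.
Arguments gid G : rename.

Fixpoint gpow {G : Group} (g : G) (k : nat) : G :=
  match k with O => gid G | S k' => gop g (gpow g k') end.

Definition subgroup (G : Group) (H : G -> Prop) : Prop :=
  (forall x y, geq x y -> H x -> H y) /\ H (gid G) /\
  (forall x y, H x -> H y -> H (gop x y)) /\ (forall x, H x -> H (ginv x)).

Definition normal_subgroup (G : Group) (N : G -> Prop) : Prop :=
  subgroup G N /\ forall g x, N x -> N (gop (gop g x) (ginv g)).

(* H has finitely many left cosets c H *)
Definition finite_index (G : Group) (H : G -> Prop) : Prop :=
  subgroup G H /\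
  exists cs : list G, forall g : G, exists c, In c cs /\ H (gop (ginv c) g).

Definition residually_finite (G : Group) : Prop :=
  forall g : G, ~ geq g (gid G) -> exists H, finite_index G H /\ ~ H g.

Definition ncl (G : Group) (S : G -> Prop) (g : G) : Prop :=
  forall N, normal_subgroup G N -> (forall s, S s -> N s) -> N g.

Lemma ncl_normal (G : Group) (S : G -> Prop) : normal_subgroup G (ncl G S).
Proof.
  unfold ncl; split; [split; [|split; [|split]]|].
  - intros x y Hxy Hx N HN HS. pose proof HN as [[Hr _] _]. exact (Hr _ _ Hxy (Hx N HN HS)).
  - intros N HN HS. destruct HN as [[_ [H1 _]] _]. exact H1.
  - intros x y Hx Hy N HN HS. pose proof HN as [[_ [_ [Hm _]]] _]. exact (Hm _ _ (Hx N HN HS) (Hy N HN HS)).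
  - intros x Hx N HN HS. pose proof HN as [[_ [_ [_ Hi]]] _]. exact (Hi _ (Hx N HN HS)).
  - intros g0 x0 Hx N HN HS. pose proof HN as [_ Hc]. exact (Hc _ _ (Hx N HN HS)).
Qed.

Add Parametric Relation (G : Group) : (carrier G) (@geq G)
  reflexivity proved by (@geq_refl G)
  symmetry proved by (@geq_sym G)
  transitivity proved by (@geq_trans G) as geq_rel.

Add Parametric Morphism (G : Group) : (@gop G)
  with signature (@geq G) ==> (@geq G) ==> (@geq G) as gop_mor.
Proof. intros; apply gop_compat; auto. Qed.

Add Parametric Morphism (G : Group) : (@ginv G)
  with signature (@geq G) ==> (@geq G) as ginv_mor.
Proof. intros; apply ginv_compat; auto. Qed.

Section GroupLemmas.
Variable G : Group.
Implicit Types x y z : G.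

Lemma assocR x y z : geq (gop (gop x y) z) (gop x (gop y z)).
Proof. symmetry; apply gop_assoc. Qed.

Lemma inv_unique x y : geq (gop x y) (gid G) -> geq y (ginv x).
Proof.
  intro H.
  rewrite <- (gop_id_l G y), <- (gop_inv_l G x), assocR, H, gop_id_r. reflexivity.
Qed.

Lemma inv_inv x : geq (ginv (ginv x)) x.
Proof. symmetry; apply inv_unique, gop_inv_l. Qed.

Lemma inv_op x y : geq (ginv (gop x y)) (gop (ginv y) (ginv x)).
Proof.
  symmetry; apply inv_unique.
  rewrite assocR, <- (assocR y), gop_inv_r, gop_id_l, gop_inv_r. reflexivity.
Qed.

Lemma inv_id : geq (ginv (gid G)) (gid G).
Proof. symmetry; apply inv_unique, gop_id_l. Qed.

Lemma cancel1 x z : geq (gop (ginv x) (gop x z)) z.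
Proof. rewrite gop_assoc, gop_inv_l, gop_id_l; reflexivity. Qed.

Lemma cancel2 x z : geq (gop x (gop (ginv x) z)) z.
Proof. rewrite gop_assoc, gop_inv_r, gop_id_l; reflexivity. Qed.
End GroupLemmas.

Ltac gsimpl :=
  repeat (first [ setoid_rewrite assocR | setoid_rewrite inv_op
                | setoid_rewrite inv_inv | setoid_rewrite inv_id
                | setoid_rewrite cancel1 | setoid_rewrite cancel2
                | setoid_rewrite gop_inv_l | setoid_rewrite gop_inv_r
                | setoid_rewrite gop_id_l | setoid_rewrite gop_id_r ]).

Section Quotient.
Variables (G : Group) (N : G -> Prop) (HN : normal_subgroup G N).

Definition qeq (x y : G) : Prop := N (gop (ginv x) y).

Lemma N_resp x y : geq x y -> N x -> N y.
Proof. destruct HN as [[H _] _]; exact (H x y). Qed.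
Lemma N_id : N (gid G).
Proof. destruct HN as [[_ [H _]] _]; exact H. Qed.
Lemma N_op x y : N x -> N y -> N (gop x y).
Proof. destruct HN as [[_ [_ [H _]]] _]; exact (H x y). Qed.
Lemma N_inv x : N x -> N (ginv x).
Proof. destruct HN as [[_ [_ [_ H]]] _]; exact (H x). Qed.
Lemma N_conj g x : N x -> N (gop (gop g x) (ginv g)).
Proof. destruct HN as [_ H]; exact (H g x). Qed.

Lemma geq_qeq x y : geq x y -> qeq x y.
Proof. intro H; unfold qeq; apply (N_resp (gid G)); [rewrite H; symmetry; apply gop_inv_l | apply N_id]. Qed.

Lemma qeq_refl x : qeq x x.
Proof. apply geq_qeq; reflexivity. Qed.

Lemma qeq_sym x y : qeq x y -> qeq y x.
Proof.
  unfold qeq; intro H. apply N_inv in H. apply (N_resp _ _ (inv_op G _ _)) in H.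
  apply (N_resp _ _ (gop_compat G _ _ _ _ (geq_refl G _) (inv_inv G x))) in H. exact H.
Qed.

Lemma qeq_trans x y z : qeq x y -> qeq y z -> qeq x z.
Proof.
  unfold qeq; intros H1 H2. eapply N_resp; [|exact (N_op _ _ H1 H2)]; gsimpl; reflexivity.
Qed.

Lemma qop_compat x x' y y' : qeq x x' -> qeq y y' -> qeq (gop x y) (gop x' y').
Proof.
  unfold qeq; intros H1 H2.
  pose proof (N_op _ _ (N_conj (ginv y) _ H1) H2) as H.
  eapply N_resp; [|exact H]; gsimpl; reflexivity.
Qed.

Lemma qinv_compat x x' : qeq x x' -> qeq (ginv x) (ginv x').
Proof.
  unfold qeq; intro H1.
  pose proof (N_conj x _ (N_inv _ H1)) as H.
  eapply N_resp; [|exact H]; gsimpl; reflexivity.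
Qed.

Definition quotient : Group :=
  @mkGroup (carrier G) qeq (@gop G) (gid G) (@ginv G)
    qeq_refl qeq_sym qeq_trans qop_compat qinv_compat
    (fun x y z => geq_qeq _ _ (gop_assoc G x y z))
    (fun x => geq_qeq _ _ (gop_id_l G x))
    (fun x => geq_qeq _ _ (gop_id_r G x))
    (fun x => geq_qeq _ _ (gop_inv_l G x))
    (fun x => geq_qeq _ _ (gop_inv_r G x)).
End Quotient.

Definition Hk (G : Group) (gs : list G) (k : nat) : G -> Prop :=
  ncl G (fun s => exists g, In g gs /\ s = gpow g k).

Definition Hk_normal (G : Group) (gs : list G) (k : nat) : normal_subgroup G (Hk G gs k) :=
  ncl_normal G _.

(* Free groups: words over letters (i, true) = x_i, (i, false) = x_i^-1 *)
Definition letter := (nat * bool)%type.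
Definition word := list letter.
Definition wordn (n : nat) (w : word) : Prop := Forall (fun a => (fst a < n)%nat) w.
Definition linv (a : letter) : letter := (fst a, negb (snd a)).
Definition winv (w : word) : word := rev (map linv w).
Fixpoint wpow (u : word) (m : nat) : word :=
  match m with O => [] | S m' => u ++ wpow u m' end.
Definition red_push (a : letter) (s : word) : word :=
  match s with
  | b :: s' => if (Nat.eqb (fst a) (fst b) && xorb (snd a) (snd b))%bool then s' else a :: s
  | [] => [a]
  end.
(* free reduction; two words are equal in the free group iff their reductions agree *)
Definition reduce (w : word) : word := fold_right red_push [] w.
Definition free_eq (w v : word) : Prop := reduce w = reduce v.

Definition proper_power (n : nat) (u : word) : Prop :=
  exists v m, wordn n v /\ (2 <= m)%nat /\ free_eq u (wpow v m).

(* products of conjugates of relators (and their inverses) in F_n *)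
Inductive nclF (n : nat) (R : list word) : word -> Prop :=
| nclF_nil : nclF n R []
| nclF_cons c r (eps : bool) w :
    wordn n c -> In r R -> nclF n R w ->
    nclF n R (c ++ (if eps then r else winv r) ++ winv c ++ w).

Definition in_nclF (n : nat) (R : list word) (w : word) : Prop :=
  exists v, nclF n R v /\ free_eq v w.

Definition eval_letter (K : Group) (x : nat -> K) (a : letter) : K :=
  if snd a then x (fst a) else ginv (x (fst a)).
Definition evalw (K : Group) (x : nat -> K) (w : word) : K :=
  fold_right (fun a acc => gop (eval_letter K x a) acc) (gid K) w.

(* A finite presentation <x_1..x_n | u_1^m_1, ..., u_s^m_s> of K, with the
   u_i not proper powers in F_n, together with the canonical epimorphism
   phi : F_n -> K (x_i |-> pr_x i) whose kernel is the normal closure of R. *)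
Record presentation (K : Group) := {
  pr_n : nat;
  pr_x : nat -> K;
  pr_rels : list (word * nat);
  pr_rels_ok : Forall (fun p => wordn pr_n (fst p) /\ ~ proper_power pr_n (fst p)
                                /\ (1 <= snd p)%nat) pr_rels;
  pr_rels_nodup : NoDup (map (fun p => reduce (wpow (fst p) (snd p))) pr_rels);
  pr_gen : forall g : K, exists w, wordn pr_n w /\ geq (evalw K pr_x w) g;
  pr_ker : forall w, wordn pr_n w ->
     (geq (evalw K pr_x w) (gid K) <->
      in_nclF pr_n (map (fun p => wpow (fst p) (snd p)) pr_rels) w) }.

Definition finitely_presented (K : Group) : Prop := inhabited (presentation K).

Definition RK (K : Group) (g : K) : Prop := forall H, finite_index K H -> H g.

(* k is the order of g R_K in K / R_K *)
Definition is_RK_order (K : Group) (g : K) (k : nat) : Prop :=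
  (1 <= k)%nat /\ RK K (gpow g k) /\ forall j, (1 <= j < k)%nat -> ~ RK K (gpow g j).

(* 1/k, with 1/infinity = 0 *)
Definition recip_order (K : Group) (g : K) : R :=
  match excluded_middle_informative (exists k, is_RK_order K g k) with
  | left H => / INR (proj1_sig (constructive_indefinite_description _ H))
  | right _ => 0
  end.

Definition rdefQ (K : Group) (Q : presentation K) : R :=
  INR (pr_n K Q) -
  fold_right Rplus 0 (map (fun p => recip_order K (evalw K (pr_x K Q) (fst p))) (pr_rels K Q)).

Definition rdef (K : Group) : Rbar :=
  Lub_Rbar (fun r => exists Q : presentation K, r = rdefQ K Q).

(* Fix a presentation Q of G with rdef(Q) > 1 + eps and split the g_i into
   torsion elements and the elements y_1, ..., y_m of infinite order.  For k a
   multiple of the orders of the torsion g_i, G/H_k is presented by Q together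
   with new generators t_i and relators t_i^-1 w_i (w_i a word for y_i) and t_i^k.
   Each t_i^-1 w_i has RK-order 1, so it cancels the new generator in rdef, and
   t_i^k costs the reciprocal of the RK-order of y_i in G/H_k.  Residual
   finiteness gives a finite index normal subgroup N missing y_i^j for
   0 < j < M, where m/M < eps, and missing the powers of the old relator roots
   below their RK-orders.  If k is moreover a multiple of the orders of all g_i
   modulo N, then H_k <= N, so none of these RK-orders drops in G/H_k and
   rdef(G/H_k) >= rdef(Q) - m/M > 1. *)

From Stdlib Require Import Reals List Arith Lia ZArith Bool ClassicalEpsilon Classical Lra.
From Coquelicot Require Import Rbar Lub.
Import ListNotations.

(** * Free reduction *)

Definition cancels (a b : letter) : bool :=
  (Nat.eqb (fst a) (fst b) && xorb (snd a) (snd b))%bool.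

Lemma cancels_linv a b : cancels a b = true <-> b = linv a.
Proof.
  destruct a as [i s], b as [j t]; unfold cancels, linv; simpl; split.
  - intro H. apply andb_true_iff in H as [H1 H2]. apply Nat.eqb_eq in H1. subst.
    destruct s, t; simpl in *; congruence.
  - intro H; inversion H; subst. rewrite Nat.eqb_refl; destruct s; reflexivity.
Qed.

Lemma linv_linv a : linv (linv a) = a.
Proof. destruct a as [i []]; reflexivity. Qed.

Lemma cancels_linv_self a : cancels (linv a) a = true.
Proof. apply cancels_linv. now rewrite linv_linv. Qed.

Lemma red_push_cons a b s :
  red_push a (b :: s) = if cancels a b then s else a :: b :: s.
Proof. reflexivity. Qed.

Inductive reduced : word -> Prop :=
| reduced_nil : reduced []
| reduced_one a : reduced [a]
| reduced_cons a b s : cancels a b = false -> reduced (b :: s) -> reduced (a :: b :: s).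

Lemma reduced_tail a s : reduced (a :: s) -> reduced s.
Proof. intro H; inversion H; subst; auto; constructor. Qed.

Lemma red_push_reduced a s : reduced s -> reduced (red_push a s).
Proof.
  intro H. destruct s as [|b s]; [constructor|].
  rewrite red_push_cons. destruct (cancels a b) eqn:E.
  - eapply reduced_tail; eauto.
  - constructor; auto.
Qed.

Lemma reduce_reduced w : reduced (reduce w).
Proof. induction w; simpl; [constructor | apply red_push_reduced; auto]. Qed.

Lemma red_push_linv a s : reduced s -> red_push (linv a) (red_push a s) = s.
Proof.
  intro H. destruct s as [|b s].
  - change (red_push a []) with [a]. now rewrite red_push_cons, cancels_linv_self.
  - rewrite red_push_cons. destruct (cancels a b) eqn:E.
    + apply cancels_linv in E. subst b. destruct s as [|c s]; [reflexivity|].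
      rewrite red_push_cons. inversion H; subst. now rewrite H2.
    + now rewrite red_push_cons, cancels_linv_self.
Qed.

Lemma red_push_linv_r a s : reduced s -> red_push a (red_push (linv a) s) = s.
Proof. intro H. rewrite <- (linv_linv a) at 1. now apply red_push_linv. Qed.

(* [push_word w s] is the reduction of [w ++ s] when [s] is reduced. *)
Definition push_word (w s : word) : word := fold_right red_push s w.

Lemma reduce_app a b : reduce (a ++ b) = push_word a (reduce b).
Proof. apply fold_right_app. Qed.

Lemma push_word_reduced w s : reduced s -> reduced (push_word w s).
Proof. induction w; simpl; auto. intro; apply red_push_reduced; auto. Qed.

Lemma push_word_red_push a t s : reduced t -> reduced s ->
  push_word (red_push a t) s = red_push a (push_word t s).
Proof.
  intros Ht Hs. destruct t as [|b t]; [reflexivity|].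
  rewrite red_push_cons. destruct (cancels a b) eqn:E; [|reflexivity].
  apply cancels_linv in E. subst b.
  change (push_word (linv a :: t) s) with (red_push (linv a) (push_word t s)).
  rewrite red_push_linv_r; [reflexivity|].
  apply push_word_reduced; auto.
Qed.

Lemma push_word_reduce w s : reduced s -> push_word (reduce w) s = push_word w s.
Proof.
  intro Hs. induction w; simpl; [reflexivity|].
  rewrite push_word_red_push; [now rewrite IHw | apply reduce_reduced | exact Hs].
Qed.

Lemma reduce_id s : reduced s -> reduce s = s.
Proof.
  induction 1; [reflexivity | reflexivity |].
  simpl in IHreduced |- *. rewrite IHreduced. simpl. fold (cancels a b). now rewrite H.
Qed.

Lemma reduce_idem w : reduce (reduce w) = reduce w.
Proof. apply reduce_id, reduce_reduced. Qed.

Lemma reduce_app_reduce a b : reduce (a ++ b) = reduce (reduce a ++ reduce b).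
Proof.
  rewrite !reduce_app, reduce_idem, push_word_reduce; auto. apply reduce_reduced.
Qed.

Lemma free_eq_refl a : free_eq a a.
Proof. reflexivity. Qed.

Lemma free_eq_sym a b : free_eq a b -> free_eq b a.
Proof. unfold free_eq; auto. Qed.

Lemma free_eq_trans a b c : free_eq a b -> free_eq b c -> free_eq a c.
Proof. unfold free_eq; congruence. Qed.

Lemma free_eq_app a a' b b' : free_eq a a' -> free_eq b b' -> free_eq (a ++ b) (a' ++ b').
Proof.
  unfold free_eq; intros H1 H2. now rewrite reduce_app_reduce, H1, H2, <- reduce_app_reduce.
Qed.

Lemma free_eq_app_l a b b' : free_eq b b' -> free_eq (a ++ b) (a ++ b').
Proof. apply free_eq_app, free_eq_refl. Qed.

Lemma winv_app a b : winv (a ++ b) = winv b ++ winv a.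
Proof. unfold winv. now rewrite map_app, rev_app_distr. Qed.

Lemma winv_cons a w : winv (a :: w) = winv w ++ [linv a].
Proof. reflexivity. Qed.

Lemma winv_winv w : winv (winv w) = w.
Proof.
  unfold winv. rewrite map_rev, rev_involutive, map_map.
  erewrite map_ext; [apply map_id | intro; apply linv_linv].
Qed.

Lemma reduce_app_winv w : reduce (w ++ winv w) = [].
Proof.
  induction w; simpl; [reflexivity|].
  rewrite winv_cons, app_assoc, reduce_app_reduce, IHw. simpl.
  rewrite Nat.eqb_refl; destruct (snd a); reflexivity.
Qed.

Lemma reduce_winv_app w : reduce (winv w ++ w) = [].
Proof. rewrite <- (winv_winv w) at 2. apply reduce_app_winv. Qed.

Lemma free_eq_cancel_l a c b : free_eq (a ++ winv c ++ c ++ b) (a ++ b).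
Proof.
  unfold free_eq. rewrite (reduce_app_reduce a), (reduce_app_reduce a b). do 2 f_equal.
  rewrite app_assoc, reduce_app_reduce, reduce_winv_app. apply reduce_idem.
Qed.

Lemma free_eq_cancel_r a c b : free_eq (a ++ c ++ winv c ++ b) (a ++ b).
Proof. rewrite <- (winv_winv c) at 1. apply free_eq_cancel_l. Qed.

Lemma free_eq_winv a b : free_eq a b -> free_eq (winv a) (winv b).
Proof.
  intro H.
  pose proof (free_eq_cancel_r (winv a) b []) as E1. rewrite !app_nil_r in E1.
  pose proof (free_eq_cancel_l [] a (winv b)) as E2. simpl in E2.
  eapply free_eq_trans; [apply free_eq_sym, E1|].
  eapply free_eq_trans; [|apply E2].
  apply free_eq_app_l, free_eq_app; [apply free_eq_sym, H | apply free_eq_refl].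
Qed.

Lemma wordn_app n a b : wordn n a -> wordn n b -> wordn n (a ++ b).
Proof. unfold wordn; intros; apply Forall_app; auto. Qed.

Lemma wordn_winv n a : wordn n a -> wordn n (winv a).
Proof.
  unfold wordn, winv; intro H. apply Forall_rev, Forall_map.
  eapply Forall_impl; [|exact H]. intros [i b]; simpl; auto.
Qed.

Lemma wordn_wpow n a m : wordn n a -> wordn n (wpow a m).
Proof. intro; induction m; simpl; [constructor | apply wordn_app; auto]. Qed.

Lemma wordn_mono n n' a : (n <= n')%nat -> wordn n a -> wordn n' a.
Proof. unfold wordn; intros; eapply Forall_impl; [|eauto]; simpl; intros; lia. Qed.

Lemma wordn_letter n i b : (i < n)%nat -> wordn n [(i, b)].
Proof. intro; repeat constructor; assumption. Qed.

(** * Normal closures in free groups *)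

Section NormalClosure.
Variables (n : nat) (R : list word).

Lemma nclF_app v1 v2 : nclF n R v1 -> nclF n R v2 -> nclF n R (v1 ++ v2).
Proof.
  induction 1; intro H2; simpl; auto.
  rewrite <- !app_assoc. constructor; auto.
Qed.

Lemma nclF_winv v : nclF n R v -> nclF n R (winv v).
Proof.
  induction 1; [constructor|].
  rewrite !winv_app, winv_winv, <- !app_assoc.
  apply nclF_app; auto.
  pose proof (nclF_cons n R c r (negb eps) [] H H0 (nclF_nil n R)) as K.
  rewrite app_nil_r in K.
  destruct eps; simpl in *; rewrite ?winv_winv; auto.
Qed.

Lemma nclF_conj c v : wordn n c -> nclF n R v ->
  exists v', nclF n R v' /\ free_eq v' (c ++ v ++ winv c).
Proof.
  intros Hc. induction 1.
  - exists []. split; [constructor|]. unfold free_eq. simpl. now rewrite reduce_app_winv.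
  - destruct IHnclF as [v' [Hv' Hfe]].
    set (r' := if eps then r else winv r).
    exists ((c ++ c0) ++ r' ++ winv (c ++ c0) ++ v').
    split; [constructor; auto; apply wordn_app; auto|].
    rewrite winv_app.
    eapply free_eq_trans.
    { do 3 apply free_eq_app_l. exact Hfe. }
    rewrite <- !app_assoc.
    replace (c ++ c0 ++ r' ++ winv c0 ++ winv c ++ c ++ w ++ winv c)
      with ((c ++ c0 ++ r' ++ winv c0) ++ winv c ++ c ++ (w ++ winv c))
      by now rewrite <- !app_assoc.
    eapply free_eq_trans; [apply free_eq_cancel_l|].
    rewrite <- !app_assoc. apply free_eq_refl.
Qed.

Lemma in_nclF_nil : in_nclF n R [].
Proof. exists []; split; [constructor | reflexivity]. Qed.

Lemma in_nclF_free_eq w w' : free_eq w w' -> in_nclF n R w -> in_nclF n R w'.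
Proof. intros H [v [Hv Hf]]. exists v; split; auto. eapply free_eq_trans; eauto. Qed.

Lemma in_nclF_app a b : in_nclF n R a -> in_nclF n R b -> in_nclF n R (a ++ b).
Proof.
  intros [v1 [H1 F1]] [v2 [H2 F2]]. exists (v1 ++ v2).
  split; [apply nclF_app | apply free_eq_app]; auto.
Qed.

Lemma in_nclF_winv a : in_nclF n R a -> in_nclF n R (winv a).
Proof.
  intros [v [H1 F1]]. exists (winv v).
  split; [apply nclF_winv | apply free_eq_winv]; auto.
Qed.

Lemma in_nclF_conj c w : wordn n c -> in_nclF n R w -> in_nclF n R (c ++ w ++ winv c).
Proof.
  intros Hc [v [Hv F]]. destruct (nclF_conj c v Hc Hv) as [v' [H' F']].
  exists v'; split; auto. eapply free_eq_trans; [exact F'|].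
  apply free_eq_app_l, free_eq_app; [exact F | apply free_eq_refl].
Qed.

Lemma in_nclF_rel r : In r R -> in_nclF n R r.
Proof.
  intro H. pose proof (nclF_cons n R [] r true [] (Forall_nil _) H (nclF_nil n R)) as K.
  simpl in K. rewrite app_nil_r in K. exists r; split; [exact K | reflexivity].
Qed.

Lemma in_nclF_app_winv v u :
  in_nclF n R (v ++ winv u) -> in_nclF n R u -> in_nclF n R v.
Proof.
  intros h1 h2. eapply in_nclF_free_eq; [|exact (in_nclF_app _ _ h1 h2)].
  rewrite <- app_assoc. pose proof (free_eq_cancel_l v u []) as E.
  rewrite !app_nil_r in E. exact E.
Qed.
End NormalClosure.

Lemma in_nclF_mono n n' R R' v : (n <= n')%nat -> incl R R' ->
  in_nclF n R v -> in_nclF n' R' v.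
Proof.
  intros Hn HR [w [H F]]. exists w; split; [clear F | exact F].
  induction H; [constructor|].
  constructor; [eapply wordn_mono; eauto | apply HR; auto | exact IHnclF].
Qed.

Section Eval.
Variables (K : Group) (x : nat -> K).

Lemma evalw_cons a w : evalw K x (a :: w) = gop (eval_letter K x a) (evalw K x w).
Proof. reflexivity. Qed.

Lemma evalw_app a b : geq (evalw K x (a ++ b)) (gop (evalw K x a) (evalw K x b)).
Proof.
  induction a; simpl; [symmetry; apply gop_id_l|].
  rewrite IHa. apply gop_assoc.
Qed.

Lemma eval_linv a : geq (eval_letter K x (linv a)) (ginv (eval_letter K x a)).
Proof.
  destruct a as [i []]; unfold eval_letter, linv; simpl;
    [reflexivity | symmetry; apply inv_inv].
Qed.

Lemma evalw_red_push a s :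
  geq (evalw K x (red_push a s)) (gop (eval_letter K x a) (evalw K x s)).
Proof.
  destruct s as [|b s]; [reflexivity|].
  rewrite red_push_cons. destruct (cancels a b) eqn:E; [|reflexivity].
  apply cancels_linv in E. subst b. rewrite evalw_cons, eval_linv, cancel2. reflexivity.
Qed.

Lemma evalw_reduce w : geq (evalw K x (reduce w)) (evalw K x w).
Proof. induction w; simpl; [reflexivity|]. rewrite evalw_red_push, IHw. reflexivity. Qed.

Lemma evalw_free_eq a b : free_eq a b -> geq (evalw K x a) (evalw K x b).
Proof.
  unfold free_eq; intro H. rewrite <- (evalw_reduce a), <- (evalw_reduce b), H. reflexivity.
Qed.

Lemma evalw_winv w : geq (evalw K x (winv w)) (ginv (evalw K x w)).
Proof.
  induction w; [symmetry; apply inv_id|].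
  rewrite winv_cons, evalw_app, IHw, (evalw_cons a w), inv_op.
  change (evalw K x [linv a]) with (gop (eval_letter K x (linv a)) (gid K)).
  rewrite eval_linv, gop_id_r. reflexivity.
Qed.

Lemma evalw_wpow u m : geq (evalw K x (wpow u m)) (gpow (evalw K x u) m).
Proof. induction m; simpl; [reflexivity|]. rewrite evalw_app, IHm. reflexivity. Qed.

Lemma in_nclF_eval n R w : (forall r, In r R -> geq (evalw K x r) (gid K)) ->
  in_nclF n R w -> geq (evalw K x w) (gid K).
Proof.
  intros HR [v [Hv F]]. rewrite <- (evalw_free_eq _ _ F). clear F.
  induction Hv; [reflexivity|].
  assert (Hr : geq (evalw K x (if eps then r else winv r)) (gid K)).
  { destruct eps; [apply HR; auto|]. rewrite evalw_winv, HR; auto. apply inv_id. }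
  rewrite !evalw_app, Hr, IHHv, evalw_winv, (gop_id_r K (ginv _)), (gop_id_l K (ginv _)).
  apply gop_inv_r.
Qed.

Lemma evalw_ext (y : nat -> K) n w : wordn n w -> (forall i, (i < n)%nat -> x i = y i) ->
  evalw K x w = evalw K y w.
Proof.
  intros Hw Hxy. induction Hw; simpl; [reflexivity|].
  rewrite IHHw. unfold eval_letter. rewrite Hxy; auto.
Qed.
End Eval.

Definition subst (f : letter -> word) (w : word) : word := flat_map f w.

Lemma subst_app f a b : subst f (a ++ b) = subst f a ++ subst f b.
Proof. apply flat_map_app. Qed.

Lemma subst_cons f a w : subst f (a :: w) = f a ++ subst f w.
Proof. reflexivity. Qed.

Lemma subst_wpow f u m : subst f (wpow u m) = wpow (subst f u) m.
Proof. induction m; simpl; [reflexivity|]. now rewrite subst_app, IHm. Qed.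

Section Subst.
Variable f : letter -> word.
Hypothesis f_linv : forall a, f (linv a) = winv (f a).

Lemma subst_red_push a t : reduce (subst f (red_push a t)) = reduce (subst f (a :: t)).
Proof.
  destruct t as [|b t]; [reflexivity|].
  rewrite red_push_cons. destruct (cancels a b) eqn:E; [|reflexivity].
  apply cancels_linv in E; subst b. rewrite !subst_cons, f_linv.
  symmetry. exact (free_eq_cancel_r [] (f a) (subst f t)).
Qed.

Lemma subst_reduce w : reduce (subst f w) = reduce (subst f (reduce w)).
Proof.
  induction w; [reflexivity|].
  simpl reduce. now rewrite subst_red_push, !subst_cons, !reduce_app, IHw.
Qed.

Lemma subst_free_eq a b : free_eq a b -> free_eq (subst f a) (subst f b).
Proof. unfold free_eq; intro H. now rewrite subst_reduce, H, <- subst_reduce. Qed.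
End Subst.

Definition exp_sum_letter (j : nat) (a : letter) : Z :=
  if Nat.eqb (fst a) j then (if snd a then 1 else -1)%Z else 0%Z.
Definition exp_sum (j : nat) (w : word) : Z :=
  fold_right (fun a acc => (exp_sum_letter j a + acc)%Z) 0%Z w.

Lemma exp_sum_app j a b : exp_sum j (a ++ b) = (exp_sum j a + exp_sum j b)%Z.
Proof. induction a; simpl; [reflexivity|]. rewrite IHa; lia. Qed.

Lemma exp_sum_linv j a : exp_sum_letter j (linv a) = (- exp_sum_letter j a)%Z.
Proof. destruct a as [i []]; unfold exp_sum_letter, linv; simpl; destruct (i =? j); reflexivity. Qed.

Lemma exp_sum_reduce j w : exp_sum j (reduce w) = exp_sum j w.
Proof.
  induction w; simpl; [reflexivity|]. rewrite <- IHw.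
  destruct (reduce w) as [|b s]; [reflexivity|].
  rewrite red_push_cons. destruct (cancels a b) eqn:E; [|reflexivity].
  apply cancels_linv in E; subst b. simpl. rewrite exp_sum_linv. lia.
Qed.

Lemma exp_sum_free_eq j a b : free_eq a b -> exp_sum j a = exp_sum j b.
Proof. unfold free_eq; intro H. now rewrite <- (exp_sum_reduce j a), <- (exp_sum_reduce j b), H. Qed.

Lemma exp_sum_wpow j u m : exp_sum j (wpow u m) = (Z.of_nat m * exp_sum j u)%Z.
Proof.
  induction m; [reflexivity|].
  change (wpow u (S m)) with (u ++ wpow u m). rewrite exp_sum_app, IHm, Nat2Z.inj_succ. lia.
Qed.

Lemma exp_sum_wordn j n w : wordn n w -> (n <= j)%nat -> exp_sum j w = 0%Z.
Proof.
  induction 1; simpl; intro; [reflexivity|]. unfold exp_sum_letter.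
  destruct (Nat.eqb_spec (fst x) j); [lia|]. rewrite IHForall; auto.
Qed.

(* a power v^m with m >= 2 has exponent sums divisible by m *)
Lemma not_proper_power_es n u j : (exp_sum j u = 1 \/ exp_sum j u = -1)%Z -> ~ proper_power n u.
Proof.
  intros Hu [v [m [_ [Hm H]]]]. apply (exp_sum_free_eq j) in H. rewrite exp_sum_wpow in H.
  assert (Z.of_nat m >= 2)%Z by lia.
  destruct Hu as [Hu|Hu]; rewrite Hu in H;
    destruct (Z.lt_trichotomy (exp_sum j v) 0) as [?|[?|?]]; nia.
Qed.

(* deleting the letters x_j, j >= n, is a retraction of F_n' onto F_n *)
Definition delete_from (n : nat) (a : letter) : word :=
  if Nat.ltb (fst a) n then [a] else [].

Lemma delete_from_linv n a : delete_from n (linv a) = winv (delete_from n a).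
Proof. unfold delete_from, linv; destruct a as [i b]; simpl. destruct (i <? n); reflexivity. Qed.

Lemma subst_delete_from_wordn n w : wordn n w -> subst (delete_from n) w = w.
Proof.
  induction 1; [reflexivity|]. rewrite subst_cons, IHForall. unfold delete_from.
  apply Nat.ltb_lt in H. now rewrite H.
Qed.

Lemma wordn_subst_delete_from n w : wordn n (subst (delete_from n) w).
Proof.
  induction w; [constructor|]. rewrite subst_cons. apply wordn_app; auto.
  unfold delete_from. destruct (fst a <? n) eqn:E; repeat constructor.
  apply Nat.ltb_lt; auto.
Qed.

Lemma proper_power_mono n n' u : wordn n u -> proper_power n' u -> proper_power n u.
Proof.
  intros Hu [v [m [Hv [Hm H]]]]. exists (subst (delete_from n) v), m.
  split; [apply wordn_subst_delete_from | split; auto].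
  apply (subst_free_eq _ (delete_from_linv n)) in H.
  now rewrite subst_delete_from_wordn, subst_wpow in H.
Qed.

(** * Subgroups of finite index *)

Section GroupTheory.
Variable G : Group.
Implicit Types g h x y c d : G.

Lemma gpow_compat g h k : geq g h -> geq (gpow g k) (gpow h k).
Proof. intro E; induction k; simpl; [reflexivity | apply gop_compat; auto]. Qed.

Lemma gpow_add g a b : geq (gpow g (a + b)) (gop (gpow g a) (gpow g b)).
Proof. induction a; simpl; [symmetry; apply gop_id_l|]. rewrite IHa. apply gop_assoc. Qed.

Lemma gpow_mul g a b : geq (gpow g (a * b)) (gpow (gpow g a) b).
Proof.
  induction b; [rewrite Nat.mul_0_r; reflexivity|].
  rewrite Nat.mul_succ_r, Nat.add_comm, gpow_add, IHb. reflexivity.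
Qed.

Lemma gpow_gid k : geq (gpow (gid G) k) (gid G).
Proof. induction k; simpl; [reflexivity|]. rewrite IHk. apply gop_id_l. Qed.

Section Subgroup.
Variable H : G -> Prop.
Hypothesis HH : subgroup G H.

Lemma sg_resp x y : geq x y -> H x -> H y.
Proof. destruct HH as [h _]; apply h. Qed.
Lemma sg_id : H (gid G).
Proof. destruct HH as [_ [h _]]; apply h. Qed.
Lemma sg_op x y : H x -> H y -> H (gop x y).
Proof. destruct HH as [_ [_ [h _]]]; apply h. Qed.
Lemma sg_inv x : H x -> H (ginv x).
Proof. destruct HH as [_ [_ [_ h]]]; apply h. Qed.

Lemma sg_gpow x k : H x -> H (gpow x k).
Proof. intro h; induction k; simpl; [apply sg_id | apply sg_op; auto]. Qed.

Lemma sg_geq_gid x : geq x (gid G) -> H x.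
Proof. intro E. apply (sg_resp (gid G)); [symmetry; exact E | apply sg_id]. Qed.

Lemma sg_coset_change c d g :
  H (gop (ginv c) d) -> H (gop (ginv c) g) -> H (gop (ginv d) g).
Proof.
  intros h1 h2. eapply sg_resp; [|exact (sg_op _ _ (sg_inv _ h1) h2)].
  rewrite inv_op, inv_inv, assocR, cancel2. reflexivity.
Qed.
End Subgroup.

Lemma fi_sg H : finite_index G H -> subgroup G H.
Proof. intros [h _]; exact h. Qed.

Lemma fi_true : finite_index G (fun _ => True).
Proof.
  split; [repeat split|]. exists [gid G]. intro g. exists (gid G). split; simpl; auto.
Qed.

Lemma fi_inter H1 H2 : finite_index G H1 -> finite_index G H2 ->
  finite_index G (fun x => H1 x /\ H2 x).
Proof.
  intros [S1 [cs1 C1]] [S2 [cs2 C2]]. split.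
  - split; [|split; [|split]].
    + intros x y E [a b]. split; eapply sg_resp; eauto.
    + split; apply sg_id; auto.
    + intros x y [a b] [c d]; split; apply sg_op; auto.
    + intros x [a b]; split; apply sg_inv; auto.
  - (* one representative for each pair of cosets that meet *)
    set (rep := fun p : G * G =>
      match excluded_middle_informative
              (exists g, H1 (gop (ginv (fst p)) g) /\ H2 (gop (ginv (snd p)) g)) with
      | left e => proj1_sig (constructive_indefinite_description _ e)
      | right _ => gid G
      end).
    exists (map rep (list_prod cs1 cs2)). intro g.
    destruct (C1 g) as [c1 [I1 K1]], (C2 g) as [c2 [I2 K2]].
    exists (rep (c1, c2)). split; [apply in_map, in_prod; auto|].
    unfold rep. destruct excluded_middle_informative as [e|ne].
    + destruct (constructive_indefinite_description _ e) as [d [D1 D2]]. simpl in *.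
      split; eapply sg_coset_change; eauto.
    + exfalso; apply ne. exists g; auto.
Qed.

Lemma fi_conj H c : finite_index G H -> finite_index G (fun x => H (gop (gop (ginv c) x) c)).
Proof.
  intros [S [cs C]]. split.
  - split; [|split; [|split]].
    + intros x y E h. eapply (sg_resp _ S); [|exact h]. rewrite E; reflexivity.
    + apply (sg_geq_gid _ S). rewrite gop_id_r. apply gop_inv_l.
    + intros x y hx hy. eapply (sg_resp _ S); [|exact (sg_op _ S _ _ hx hy)].
      gsimpl. reflexivity.
    + intros x hx. eapply (sg_resp _ S); [|exact (sg_inv _ S _ hx)]. gsimpl. reflexivity.
  - exists (map (fun d => gop (gop c d) (ginv c)) cs). intro g.
    destruct (C (gop (gop (ginv c) g) c)) as [d [Id Kd]].
    exists (gop (gop c d) (ginv c)). split; [apply in_map_iff; eauto|].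
    eapply (sg_resp _ S); [|exact Kd]. gsimpl. reflexivity.
Qed.

Lemma fi_ext P Q : (forall x, P x <-> Q x) -> finite_index G P -> finite_index G Q.
Proof.
  intros E [[h1 [h2 [h3 h4]]] [cs Hcs]]. split; [split; [|split; [|split]]|].
  - intros x y Exy Qx. apply E. apply E in Qx. eauto.
  - apply E; auto.
  - intros x y Qx Qy. apply E. apply E in Qx; apply E in Qy. auto.
  - intros x Qx. apply E. apply E in Qx. auto.
  - exists cs. intro g. destruct (Hcs g) as [c [Hc Hp]]. exists c; split; auto. apply E; auto.
Qed.

Lemma fi_conj_list H l : finite_index G H ->
  finite_index G (fun x => forall c, In c l -> H (gop (gop (ginv c) x) c)).
Proof.
  intro F. induction l as [|a l IH].
  - eapply fi_ext; [|apply fi_true]. intro; simpl; split; auto. intros _ c [].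
  - eapply fi_ext; [|apply (fi_inter _ _ (fi_conj H a F) IH)].
    intro x; simpl; split.
    + intros [h1 h2] c [<-|Hc]; auto.
    + intros h; split; auto.
Qed.

(* the core of [H]: the intersection of its conjugates by coset representatives *)
Lemma fi_core H : finite_index G H ->
  exists N, normal_subgroup G N /\ finite_index G N /\ forall x, N x -> H x.
Proof.
  intro F. pose proof F as [S [cs C]].
  set (N := fun x => forall c, In c cs -> H (gop (gop (ginv c) x) c)).
  assert (FN : finite_index G N) by apply fi_conj_list, F.
  exists N. split; [split; [apply fi_sg, FN|] | split; [exact FN|]].
  - intros g x Nx c Ic.
    destruct (C (gop (ginv g) c)) as [c' [Ic' Kc']].
    pose proof (Nx c' Ic') as Hx.
    eapply (sg_resp _ S);
      [|exact (sg_op _ S _ _ (sg_op _ S _ _ (sg_inv _ S _ Kc') Hx) Kc')].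
    gsimpl. reflexivity.
  - intros x Nx. destruct (C (gid G)) as [c0 [I0 K0]].
    assert (Hc0 : H (ginv c0)).
    { eapply (sg_resp _ S); [|exact K0]. apply gop_id_r. }
    pose proof (Nx c0 I0) as h.
    eapply (sg_resp _ S);
      [|exact (sg_op _ S _ _ (sg_op _ S _ _ (sg_inv _ S _ Hc0) h) Hc0)].
    gsimpl. reflexivity.
Qed.

(* pigeonhole: two of g^0, ..., g^|cs| lie in the same coset *)
Lemma fi_exponent N g : finite_index G N -> exists e, (1 <= e)%nat /\ N (gpow g e).
Proof.
  intros [SN [cs C]].
  assert (Hf : forall j : nat, { c | In c cs /\ N (gop (ginv c) (gpow g j)) }).
  { intro j. apply constructive_indefinite_description. apply C. }
  set (f := fun j => proj1_sig (Hf j)).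
  assert (Hgen : forall i j, (i < j)%nat -> f i = f j -> N (gpow g (j - i))).
  { intros i j Hlt E.
    destruct (proj2_sig (Hf i)) as [_ Ki], (proj2_sig (Hf j)) as [_ Kj].
    fold (f i) in Ki. fold (f j) in Kj. rewrite <- E in Kj.
    eapply (sg_resp _ SN); [|exact (sg_coset_change _ SN _ _ _ Ki Kj)].
    replace j with (i + (j - i))%nat at 1 by lia. rewrite gpow_add, cancel1. reflexivity. }
  apply NNPP. intro Hno.
  assert (ND : NoDup (map f (seq 0 (S (length cs))))).
  { apply NoDup_map_NoDup_ForallPairs; [|apply seq_NoDup].
    intros i j _ _ E. destruct (Nat.lt_total i j) as [h|[h|h]]; auto; exfalso; apply Hno.
    - exists (j - i)%nat. split; [lia | now apply Hgen].
    - exists (i - j)%nat. split; [lia | now apply Hgen]. }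
  apply NoDup_incl_length with (l' := cs) in ND.
  - rewrite length_map, length_seq in ND. lia.
  - intros c Hc. apply in_map_iff in Hc as [j [<- _]]. unfold f.
    destruct (Hf j); simpl; tauto.
Qed.

Definition avoidable (P : G -> Prop) : Prop :=
  exists H, finite_index G H /\ forall x, P x -> ~ H x.

Lemma avoidable_weaken P Q : (forall x, P x -> Q x) -> avoidable Q -> avoidable P.
Proof. intros E [H [F A]]. exists H; split; [exact F|]. intros x p; apply A; auto. Qed.

Lemma avoidable_or P Q : avoidable P -> avoidable Q -> avoidable (fun x => P x \/ Q x).
Proof.
  intros [H1 [F1 A1]] [H2 [F2 A2]]. exists (fun x => H1 x /\ H2 x).
  split; [apply fi_inter; auto|]. intros x [p|q] [h1 h2]; [eapply A1|eapply A2]; eauto.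
Qed.

Lemma avoidable_ex_list {A} (l : list A) (P : A -> G -> Prop) :
  (forall a, In a l -> avoidable (P a)) -> avoidable (fun x => exists a, In a l /\ P a x).
Proof.
  induction l as [|a l IH]; intro Hl.
  - exists (fun _ => True). split; [apply fi_true|]. intros x [b [[] _]].
  - eapply avoidable_weaken;
      [|exact (avoidable_or _ _ (Hl a (or_introl eq_refl)) (IH (fun b Hb => Hl b (or_intror Hb))))].
    intros x [b [[<-|Hb] Hp]]; [left|right]; eauto.
Qed.

Lemma avoidable_powers y K : (forall i, (1 <= i < K)%nat -> ~ RK G (gpow y i)) ->
  avoidable (fun x => exists i, (1 <= i < K)%nat /\ x = gpow y i).
Proof.
  intro HK. eapply avoidable_weaken;
    [|apply (avoidable_ex_list (seq 1 (K - 1)) (fun i x => x = gpow y i))].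
  - intros x [i [Hi ->]]. exists i. split; [apply in_seq; lia | reflexivity].
  - intros i Hi. apply in_seq in Hi.
    destruct (not_all_ex_not _ _ (HK i ltac:(lia))) as [H nH]. exists H. apply imply_to_and in nH as [F nH]. split; [exact F|]. now intros x ->.
Qed.

Lemma avoidable_normal P : avoidable P ->
  exists N, normal_subgroup G N /\ finite_index G N /\ forall x, P x -> ~ N x.
Proof.
  intros [H [F A]]. destruct (fi_core H F) as [N [NN [FN S]]].
  exists N. split; [exact NN | split; [exact FN|]]. intros x p n. apply (A x p); auto.
Qed.

Lemma RK_gid x : geq x (gid G) -> RK G x.
Proof. intros E H F. apply (sg_geq_gid _ (fi_sg _ F)); auto. Qed.

Lemma is_RK_order_unique g k1 k2 : is_RK_order G g k1 -> is_RK_order G g k2 -> k1 = k2.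
Proof.
  intros [a1 [b1 c1]] [a2 [b2 c2]]. destruct (Nat.lt_total k1 k2) as [h|[h|h]]; auto.
  - exfalso; apply (c2 k1); auto.
  - exfalso; apply (c1 k2); auto.
Qed.

Lemma recip_order_eq g k : is_RK_order G g k -> recip_order G g = / INR k.
Proof.
  intro Hk. unfold recip_order. destruct excluded_middle_informative as [e|ne].
  - destruct (constructive_indefinite_description _ e) as [k' Hk']. simpl.
    now rewrite (is_RK_order_unique _ _ _ Hk Hk').
  - exfalso; eauto.
Qed.

Lemma recip_order_le g M : (1 <= M)%nat ->
  (forall j, (1 <= j < M)%nat -> ~ RK G (gpow g j)) -> (recip_order G g <= / INR M)%R.
Proof.
  intros HM Hj. unfold recip_order. destruct excluded_middle_informative as [e|ne].
  - destruct (constructive_indefinite_description _ e) as [k [k1 [k2 k3]]]. simpl.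
    assert (M <= k)%nat by (destruct (Nat.le_gt_cases M k); auto; exfalso; apply (Hj k); auto).
    apply Rinv_le_contravar; [apply lt_0_INR; lia | apply le_INR; auto].
  - left. apply Rinv_0_lt_compat, lt_0_INR; lia.
Qed.

Lemma RK_order_exists g m : (1 <= m)%nat -> RK G (gpow g m) -> exists k, is_RK_order G g k.
Proof.
  intros Hm Hgm. induction m as [m IH] using (well_founded_induction lt_wf).
  destruct (classic (exists j, (1 <= j < m)%nat /\ RK G (gpow g j))) as [[j [Hj Hgj]]|N].
  - apply (IH j); tauto.
  - exists m. split; [exact Hm | split; [exact Hgm|]]. intros j Hj Hgj. apply N; eauto.
Qed.

Lemma recip_order_gid g : geq g (gid G) -> recip_order G g = 1%R.
Proof.
  intro E. rewrite (recip_order_eq g 1); [apply Rinv_1|].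
  split; [auto | split; [|intros; lia]]. apply RK_gid. simpl. rewrite gop_id_r. exact E.
Qed.
End GroupTheory.

Lemma gpow_quotient G S HS g j : @gpow (quotient G S HS) g j = @gpow G g j.
Proof. induction j; simpl; [reflexivity|]. now rewrite IHj. Qed.

Lemma evalw_quotient G S HS y w : evalw (quotient G S HS) y w = evalw G y w.
Proof. induction w; simpl; [reflexivity|]. now rewrite IHw. Qed.

Lemma fi_quotient G S HS N : finite_index G N -> (forall x, S x -> N x) ->
  finite_index (quotient G S HS) N.
Proof.
  intros [[h1 [h2 [h3 h4]]] [cs C]] Inc. split; [split; [|split; [|split]]|]; auto.
  - intros x y E Nx. simpl in E. unfold qeq in E. apply Inc in E.
    eapply h1; [|exact (h3 _ _ Nx E)]. apply cancel2.
  - exists cs. exact C.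
Qed.

Lemma recip_order_quotient_le G S HS N g M : finite_index G N -> (forall x, S x -> N x) ->
  (1 <= M)%nat -> (forall j, (1 <= j < M)%nat -> ~ N (gpow g j)) ->
  (recip_order (quotient G S HS) g <= / INR M)%R.
Proof.
  intros F Inc HM Hj. apply recip_order_le; auto. intros j Hj' Hr.
  apply (Hj j Hj'). rewrite <- (gpow_quotient G S HS). apply Hr. apply fi_quotient; auto.
Qed.

Lemma sumR_app l1 l2 :
  fold_right Rplus 0 (l1 ++ l2) = (fold_right Rplus 0 l1 + fold_right Rplus 0 l2)%R.
Proof. induction l1; simpl; [ring|]. rewrite IHl1. ring. Qed.

Lemma sumR_le {A} (f g : A -> R) l : (forall a, In a l -> (f a <= g a)%R) ->
  (fold_right Rplus 0 (map f l) <= fold_right Rplus 0 (map g l))%R.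
Proof. induction l; simpl; intro h; [lra|]. apply Rplus_le_compat; auto. Qed.

Lemma sumR_const {A} (c : R) (l : list A) :
  fold_right Rplus 0 (map (fun _ => c) l) = (INR (length l) * c)%R.
Proof.
  induction l; [simpl; ring|].
  change (length (a :: l)) with (S (length l)). rewrite S_INR. simpl. rewrite IHl. ring.
Qed.

(** * A presentation of G/H_k *)

Definition relator_words (l : list (word * nat)) : list word :=
  map (fun p => wpow (fst p) (snd p)) l.

Lemma pr_rels_spec G Q p : In p (pr_rels G Q) ->
  wordn (pr_n G Q) (fst p) /\ ~ proper_power (pr_n G Q) (fst p) /\ (1 <= snd p)%nat.
Proof. intro h. exact (proj1 (Forall_forall _ _) (pr_rels_ok G Q) p h). Qed.

Lemma pr_rel_trivial G Q p : In p (pr_rels G Q) ->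
  geq (gpow (evalw G (pr_x G Q) (fst p)) (snd p)) (gid G).
Proof.
  intro hp. destruct (pr_rels_spec G Q p hp) as [h1 _].
  rewrite <- evalw_wpow. apply (pr_ker G Q); [apply wordn_wpow; auto|].
  apply in_nclF_rel, (in_map (fun p => wpow (fst p) (snd p))), hp.
Qed.

Lemma pr_rel_RK_order G Q p : In p (pr_rels G Q) ->
  exists kk, is_RK_order G (evalw G (pr_x G Q) (fst p)) kk.
Proof.
  intro hp. apply (RK_order_exists G _ (snd p)); [apply (pr_rels_spec G Q p hp)|].
  apply RK_gid, pr_rel_trivial, hp.
Qed.

Section ExtendedPresentation.
Variables (G : Group) (Q : presentation G) (gs gs_inf : list G) (k : nat).
Hypothesis gs_inf_sub : forall g, In g gs_inf -> In g gs.
Hypothesis gs_torsion : forall g, In g gs -> ~ In g gs_inf -> geq (gpow g k) (gid G).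
Hypothesis k_pos : (1 <= k)%nat.

Local Open Scope nat_scope.

Let S := Hk G gs k.
Let HS := Hk_normal G gs k.
Let K := quotient G S HS.
Let n := pr_n G Q.
Let x := pr_x G Q.
Let rels := pr_rels G Q.
Let m := length gs_inf.

Definition word_of (g : G) : word :=
  proj1_sig (constructive_indefinite_description _ (pr_gen G Q g)).

Lemma word_of_wordn g : wordn n (word_of g).
Proof. unfold word_of. destruct constructive_indefinite_description as [w [h1 h2]]; auto. Qed.

Lemma word_of_eval g : geq (evalw G x (word_of g)) g.
Proof. unfold word_of. destruct constructive_indefinite_description as [w [h1 h2]]; auto. Qed.

(* the new generator x_(n+i) stands for the i-th element of [gs_inf] *)
Definition ext_n : nat := n + m.
Definition new_gen (i : nat) : G := nth i gs_inf (gid G).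
Definition ext_x (i : nat) : G := if Nat.ltb i n then x i else new_gen (i - n).
Definition tie_word (i : nat) : word := (n + i, false) :: word_of (new_gen i).
Definition tie_rel (i : nat) : word * nat := (tie_word i, 1%nat).
Definition power_rel (i : nat) : word * nat := ([(n + i, true)], k).
Definition ext_rels : list (word * nat) :=
  rels ++ map tie_rel (seq 0 m) ++ map power_rel (seq 0 m).
Definition ext_ncl (w : word) : Prop := in_nclF ext_n (relator_words ext_rels) w.

Lemma new_gen_in i : (i < m)%nat -> In (new_gen i) gs_inf.
Proof. intro; apply nth_In; auto. Qed.

Lemma ext_x_old i : (i < n)%nat -> ext_x i = x i.
Proof. intro h. unfold ext_x. apply Nat.ltb_lt in h. now rewrite h. Qed.

Lemma ext_x_new i : ext_x (n + i) = new_gen i.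
Proof.
  unfold ext_x. replace (n + i <? n) with false; [f_equal; lia|].
  symmetry; apply Nat.ltb_ge; lia.
Qed.

Lemma evalw_ext_x_old w : wordn n w -> evalw G ext_x w = evalw G x w.
Proof. intro h. symmetry. apply (evalw_ext G x ext_x n w h). intros; symmetry; apply ext_x_old; auto. Qed.

Lemma evalw_tie_word i : geq (evalw G ext_x (tie_word i)) (gid G).
Proof.
  unfold tie_word. rewrite evalw_cons, evalw_ext_x_old by apply word_of_wordn.
  unfold eval_letter; simpl. rewrite ext_x_new, word_of_eval. apply gop_inv_l.
Qed.

Lemma evalw_power_rel i : geq (evalw G ext_x (wpow [(n + i, true)] k)) (gpow (new_gen i) k).
Proof.
  rewrite evalw_wpow. apply gpow_compat. simpl. unfold eval_letter; simpl.
  rewrite ext_x_new. apply gop_id_r.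
Qed.

Lemma ext_ncl_old v : wordn n v -> geq (evalw G x v) (gid G) -> ext_ncl v.
Proof.
  intros hv he. apply (pr_ker G Q v hv) in he. eapply in_nclF_mono; [| |exact he].
  - unfold ext_n; lia.
  - intros r hr. unfold relator_words, ext_rels. rewrite map_app. apply in_or_app; auto.
Qed.

Lemma ext_ncl_tie i : (i < m)%nat -> ext_ncl (tie_word i).
Proof.
  intro h. rewrite <- (app_nil_r (tie_word i)). apply in_nclF_rel.
  unfold relator_words, ext_rels. rewrite !map_app, map_map. apply in_or_app; right.
  apply in_or_app; left. apply in_map_iff. exists i; split; [reflexivity | apply in_seq; lia].
Qed.

Lemma ext_ncl_power i : (i < m)%nat -> ext_ncl (wpow [(n + i, true)] k).
Proof.
  intro h. apply in_nclF_rel.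
  unfold relator_words, ext_rels. rewrite !map_app, map_map. apply in_or_app; right.
  apply in_or_app; right. rewrite map_map. apply in_map_iff.
  exists i; split; [reflexivity | apply in_seq; lia].
Qed.

(* substituting w_i for x_(n+i) retracts words over the new generators
   onto words over the old ones, modulo [ext_ncl] *)
Definition retract (a : letter) : word :=
  if Nat.ltb (fst a) n then [a]
  else if snd a then word_of (new_gen (fst a - n))
  else winv (word_of (new_gen (fst a - n))).

Lemma retract_letter a : (fst a < ext_n)%nat ->
  wordn n (retract a) /\ geq (evalw G x (retract a)) (eval_letter G ext_x a) /\
  ext_ncl ([a] ++ winv (retract a)).
Proof.
  destruct a as [j b]; simpl; intro hj. unfold retract; simpl.
  destruct (j <? n) eqn:E.
  - apply Nat.ltb_lt in E. split; [apply wordn_letter, E | split].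
    + simpl. rewrite gop_id_r. unfold eval_letter; simpl. rewrite ext_x_old; auto. reflexivity.
    + eapply in_nclF_free_eq; [|apply in_nclF_nil]. exact (eq_sym (reduce_app_winv [(j, b)])).
  - apply Nat.ltb_ge in E. set (i := j - n).
    assert (Hj : j = n + i) by (unfold i; lia).
    assert (hi : (i < m)%nat) by (unfold ext_n in hj; lia).
    assert (Hx : ext_x j = new_gen i) by (rewrite Hj; apply ext_x_new).
    destruct b; split; [| split | | split].
    + apply word_of_wordn.
    + unfold eval_letter; simpl. rewrite Hx. apply word_of_eval.
    + (* conjugate t_i^-1 w_i by t_i to get w_i t_i^-1 *)
      pose proof (in_nclF_winv _ _ _ (ext_ncl_tie i hi)) as h. unfold tie_word in h.
      rewrite winv_cons in h.
      pose proof (in_nclF_conj _ _ _ _ (wordn_letter ext_n j true hj) h) as h2.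
      change (linv (n + i, false)) with (n + i, true) in h2. rewrite <- Hj in h2.
      eapply in_nclF_free_eq; [|exact h2].
      rewrite <- (app_nil_r ((j, true) :: winv (word_of (new_gen i)))).
      change ((j, true) :: winv (word_of (new_gen i)))
        with ([(j, true)] ++ winv (word_of (new_gen i))).
      eapply free_eq_trans;
        [|apply (free_eq_cancel_r ([(j, true)] ++ winv (word_of (new_gen i))) [(j, true)] [])].
      rewrite <- !app_assoc. apply free_eq_refl.
    + apply wordn_winv, word_of_wordn.
    + unfold eval_letter; simpl. rewrite evalw_winv, Hx, word_of_eval. reflexivity.
    + rewrite winv_winv. pose proof (ext_ncl_tie i hi) as h. unfold tie_word in h.
      rewrite <- Hj in h. exact h.
Qed.

Lemma subst_retract w : wordn ext_n w ->
  wordn n (subst retract w) /\ geq (evalw G x (subst retract w)) (evalw G ext_x w).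
Proof.
  induction 1; [split; [constructor | reflexivity]|].
  destruct IHForall as [h1 h2]. destruct (retract_letter x0 H) as [s1 [s2 _]].
  rewrite subst_cons. split; [apply wordn_app; auto|].
  rewrite evalw_app, s2, h2. reflexivity.
Qed.

Lemma ext_ncl_retract w : wordn ext_n w -> ext_ncl (w ++ winv (subst retract w)).
Proof.
  induction 1; [apply in_nclF_nil|].
  destruct (retract_letter x0 H) as [_ [_ s3]].
  pose proof (in_nclF_conj _ _ _ _ (Forall_cons x0 H (Forall_nil _) : wordn ext_n [x0])
                IHForall) as h1.
  eapply in_nclF_free_eq; [|exact (in_nclF_app _ _ _ _ h1 s3)].
  rewrite subst_cons, winv_app.
  eapply free_eq_trans; [|eapply free_eq_trans;
    [apply (free_eq_cancel_l ([x0] ++ l ++ winv (subst retract l)) [x0] (winv (retract x0)))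
    | rewrite <- !app_assoc; apply free_eq_refl]].
  rewrite <- !app_assoc; apply free_eq_refl.
Qed.

(* a normal subgroup containing H_k; it puts the kernel of the extended
   presentation inside [ext_ncl] *)
Definition ext_ncl_fiber (g : G) : Prop :=
  forall v, wordn n v -> geq (evalw G x v) g -> ext_ncl v.

Lemma ext_ncl_via v u : wordn n v -> wordn n u -> ext_ncl u ->
  geq (evalw G x v) (evalw G x u) -> ext_ncl v.
Proof.
  intros hv hu Iu E. apply (in_nclF_app_winv _ _ v u); auto. apply ext_ncl_old.
  - apply wordn_app; auto. apply wordn_winv; auto.
  - rewrite evalw_app, evalw_winv, E. apply gop_inv_r.
Qed.

Lemma ext_ncl_fiber_normal : normal_subgroup G ext_ncl_fiber.
Proof.
  pose proof word_of_wordn as Ww. pose proof word_of_eval as We.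
  split; [split; [|split; [|split]]|].
  - intros a b E h v hv he. apply h; auto. rewrite he, E; reflexivity.
  - intros v hv he. apply ext_ncl_old; auto.
  - intros a b ha hb v hv he.
    apply (ext_ncl_via v (word_of a ++ word_of b)); auto.
    + apply wordn_app; auto.
    + apply in_nclF_app; [apply ha | apply hb]; auto.
    + rewrite he, evalw_app, !We. reflexivity.
  - intros a ha v hv he.
    apply (ext_ncl_via v (winv (word_of a))); auto.
    + apply wordn_winv; auto.
    + apply in_nclF_winv, ha; auto.
    + rewrite he, evalw_winv, We. reflexivity.
  - intros g a ha v hv he.
    apply (ext_ncl_via v (word_of g ++ word_of a ++ winv (word_of g))); auto.
    + repeat apply wordn_app; try apply wordn_winv; auto.
    + apply in_nclF_conj; [eapply wordn_mono; [|apply Ww]; unfold ext_n; lia | apply ha; auto].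
    + rewrite he, !evalw_app, evalw_winv, !We. symmetry; apply gop_assoc.
Qed.

Lemma ext_ncl_fiber_gen g : In g gs -> ext_ncl_fiber (gpow g k).
Proof.
  intros hg v hv he. destruct (classic (In g gs_inf)) as [hI|nI].
  - destruct (In_nth gs_inf g (gid G) hI) as [i [hi Ei]].
    set (u := wpow [(n + i, true)] k).
    assert (hu : wordn ext_n u) by (apply wordn_wpow, wordn_letter; unfold ext_n; lia).
    destruct (subst_retract u hu) as [s1 s2].
    assert (Isu : ext_ncl (subst retract u)).
    { apply (in_nclF_app_winv _ _ _ u); [|apply ext_ncl_power; auto].
      eapply in_nclF_free_eq; [|apply in_nclF_winv, ext_ncl_retract, hu].
      rewrite winv_app, winv_winv. apply free_eq_refl. }
    apply (ext_ncl_via v (subst retract u)); auto.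
    rewrite he, s2. unfold u. rewrite evalw_power_rel. unfold new_gen. rewrite Ei. reflexivity.
  - apply ext_ncl_old; auto. rewrite he. apply gs_torsion; auto.
Qed.

Lemma Hk_sub_ext_ncl_fiber y : S y -> ext_ncl_fiber y.
Proof.
  intro h. apply h; [apply ext_ncl_fiber_normal|]. intros s [g [hg ->]].
  apply ext_ncl_fiber_gen; auto.
Qed.

Lemma ext_ker w : wordn ext_n w ->
  (geq (evalw K ext_x w) (gid K) <-> in_nclF ext_n (relator_words ext_rels) w).
Proof.
  intro hw. unfold K. rewrite evalw_quotient. simpl. unfold qeq. split.
  - intro h. assert (hS : S (evalw G ext_x w)).
    { apply (N_resp _ _ HS (ginv (gop (ginv (evalw G ext_x w)) (gid G)))).
      - rewrite gop_id_r, inv_inv. reflexivity.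
      - apply N_inv; auto. }
    destruct (subst_retract w hw) as [s1 s2].
    apply (in_nclF_app_winv _ _ w (subst retract w)).
    + apply ext_ncl_retract; auto.
    + exact (Hk_sub_ext_ncl_fiber _ hS _ s1 s2).
  - intro h. enough (E : geq (evalw K ext_x w) (gid K)).
    { unfold K in E. rewrite evalw_quotient in E. exact E. }
    apply (in_nclF_eval K ext_x ext_n (relator_words ext_rels) w); auto.
    intros r hr. unfold K. rewrite evalw_quotient. simpl. unfold qeq.
    apply (N_resp _ _ HS (ginv (evalw G ext_x r))); [rewrite gop_id_r; reflexivity|].
    apply N_inv; auto.
    unfold relator_words, ext_rels in hr. rewrite !map_app in hr.
    apply in_app_or in hr as [hr|hr]; [|apply in_app_or in hr as [hr|hr]];
      apply in_map_iff in hr as [p [<- hp]].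
    + apply (N_resp _ _ HS (gid G)); [|apply N_id; auto].
      destruct (pr_rels_spec G Q p hp) as [h1 _].
      rewrite evalw_ext_x_old, evalw_wpow by (apply wordn_wpow; auto).
      symmetry. apply pr_rel_trivial, hp.
    + apply in_map_iff in hp as [i [<- hi]]. simpl. rewrite app_nil_r.
      apply (N_resp _ _ HS (gid G)); [|apply N_id; auto].
      symmetry. apply evalw_tie_word.
    + apply in_map_iff in hp as [i [<- hi]]. apply in_seq in hi. simpl.
      apply (N_resp _ _ HS (gpow (new_gen i) k)); [symmetry; apply evalw_power_rel|].
      intros N HN HG. apply HG. exists (new_gen i); split; auto. apply gs_inf_sub, new_gen_in; lia.
Qed.

Lemma ext_gen (g : K) : exists w, wordn ext_n w /\ geq (evalw K ext_x w) g.
Proof.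
  exists (word_of g). split.
  - eapply wordn_mono; [|apply word_of_wordn]. unfold ext_n; lia.
  - unfold K. rewrite evalw_quotient. simpl. apply geq_qeq; [exact HS|].
    rewrite evalw_ext_x_old by apply word_of_wordn. apply word_of_eval.
Qed.

(* The new relators are told apart, from each other and from the old ones,
   by their exponent sums in the new generators. *)
Lemma exp_sum_tie_word j i : exp_sum (n + j) (tie_word i) = if Nat.eqb i j then (-1)%Z else 0%Z.
Proof.
  unfold tie_word. change (exp_sum (n + j) ((n + i, false) :: word_of (new_gen i)))
    with (Z.add (exp_sum_letter (n + j) (n + i, false)) (exp_sum (n + j) (word_of (new_gen i)))).
  rewrite (exp_sum_wordn (n + j) n); [|apply word_of_wordn|lia]. unfold exp_sum_letter; simpl.
  destruct (Nat.eqb_spec (n + i) (n + j)), (Nat.eqb_spec i j); lia.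
Qed.

Lemma exp_sum_power_word j i : exp_sum (n + j) [(n + i, true)] = if Nat.eqb i j then 1%Z else 0%Z.
Proof.
  change (exp_sum (n + j) [(n + i, true)]) with (Z.add (exp_sum_letter (n + j) (n + i, true)) 0%Z).
  unfold exp_sum_letter; simpl. destruct (Nat.eqb_spec (n + i) (n + j)), (Nat.eqb_spec i j); lia.
Qed.

Lemma ext_rels_ok : Forall (fun p => wordn ext_n (fst p) /\
  ~ proper_power ext_n (fst p) /\ (1 <= snd p)%nat) ext_rels.
Proof.
  unfold ext_rels. apply Forall_app; split; [|apply Forall_app; split]; apply Forall_forall.
  - intros p hp. destruct (pr_rels_spec G Q p hp) as [h1 [h2 h3]]. split; [|split]; auto.
    + eapply wordn_mono; [|exact h1]. unfold ext_n; lia.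
    + intro pp. apply h2. eapply proper_power_mono; eauto.
  - intros p hp. apply in_map_iff in hp as [i [<- hi]]. apply in_seq in hi. simpl.
    split; [|split]; auto.
    + constructor; [simpl; unfold ext_n; lia|].
      eapply wordn_mono; [|apply word_of_wordn]. unfold ext_n; lia.
    + apply (not_proper_power_es _ _ (n + i)). rewrite exp_sum_tie_word, Nat.eqb_refl. auto.
  - intros p hp. apply in_map_iff in hp as [i [<- hi]]. apply in_seq in hi. simpl.
    split; [|split]; auto.
    + apply wordn_letter. unfold ext_n; lia.
    + apply (not_proper_power_es _ _ (n + i)). rewrite exp_sum_power_word, Nat.eqb_refl. auto.
Qed.

Let key (p : word * nat) : word := reduce (wpow (fst p) (snd p)).

Lemma exp_sum_key_old p j : In p rels -> exp_sum (n + j) (key p) = 0%Z.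
Proof.
  intro hp. unfold key. rewrite exp_sum_reduce. destruct (pr_rels_spec G Q p hp) as [h1 _].
  apply (exp_sum_wordn _ n); [apply wordn_wpow; auto | lia].
Qed.

Lemma exp_sum_key_tie i j : exp_sum (n + j) (key (tie_rel i)) = if Nat.eqb i j then (-1)%Z else 0%Z.
Proof. unfold key, tie_rel. cbn [fst snd wpow]. rewrite exp_sum_reduce, app_nil_r. apply exp_sum_tie_word. Qed.

Lemma exp_sum_key_power i j : exp_sum (n + j) (key (power_rel i)) = if Nat.eqb i j then Z.of_nat k else 0%Z.
Proof.
  unfold key, power_rel. cbn [fst snd]. rewrite exp_sum_reduce, exp_sum_wpow, exp_sum_power_word.
  destruct (i =? j); lia.
Qed.

Lemma NoDup_map_seq (f : nat -> word) :
  (forall i j, (i < m)%nat -> (j < m)%nat -> f i = f j -> i = j) -> NoDup (map f (seq 0 m)).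
Proof.
  intro h. apply NoDup_map_NoDup_ForallPairs; [|apply seq_NoDup].
  intros a b ha hb. apply in_seq in ha, hb. apply h; lia.
Qed.

Lemma ext_rels_nodup : NoDup (map (fun p => reduce (wpow (fst p) (snd p))) ext_rels).
Proof.
  change (NoDup (map key ext_rels)).
  unfold ext_rels. rewrite !map_app, !map_map.
  apply NoDup_app; [exact (pr_rels_nodup G Q) | apply NoDup_app |].
  - apply NoDup_map_seq. intros i j hi hj E. apply (f_equal (exp_sum (n + i))) in E.
    rewrite !exp_sum_key_tie, Nat.eqb_refl in E. destruct (Nat.eqb_spec j i); auto; lia.
  - apply NoDup_map_seq. intros i j hi hj E. apply (f_equal (exp_sum (n + i))) in E.
    rewrite !exp_sum_key_power, Nat.eqb_refl in E. destruct (Nat.eqb_spec j i); auto; lia.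
  - intros a ha hb. apply in_map_iff in ha as [i [<- hi]]. apply in_map_iff in hb as [j [E hj]].
    apply (f_equal (exp_sum (n + i))) in E. rewrite exp_sum_key_tie, exp_sum_key_power, Nat.eqb_refl in E.
    destruct (Nat.eqb_spec j i); lia.
  - intros a ha hb. apply in_map_iff in ha as [p [<- hp]].
    apply in_app_or in hb as [hb|hb]; apply in_map_iff in hb as [j [E hj]];
      apply (f_equal (exp_sum (n + j))) in E; cbn beta in E; rewrite (exp_sum_key_old p j hp) in E.
    + rewrite exp_sum_key_tie, Nat.eqb_refl in E; lia.
    + rewrite exp_sum_key_power, Nat.eqb_refl in E; lia.
Qed.

Definition ext_presentation : presentation K :=
  @Build_presentation K ext_n (ext_x : nat -> K) ext_rels ext_rels_ok ext_rels_nodup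
    ext_gen ext_ker.

(* the tie relators cost exactly what their new generators add *)
Lemma rdefQ_ext_presentation_ge (N : G -> Prop) (M : nat) :
  finite_index G N -> (forall y, S y -> N y) -> (1 <= M)%nat ->
  (forall p, In p rels -> forall kk, is_RK_order G (evalw G x (fst p)) kk ->
     forall j, (1 <= j < kk)%nat -> ~ N (gpow (evalw G x (fst p)) j)) ->
  (forall g, In g gs_inf -> forall j, (1 <= j < M)%nat -> ~ N (gpow g j)) ->
  (rdefQ G Q - INR m * / INR M <= rdefQ K ext_presentation)%R.
Proof.
  intros HN HSN HM Hold Hnew.
  unfold rdefQ. change (pr_n K ext_presentation) with ext_n.
  change (pr_rels K ext_presentation) with ext_rels.
  change (pr_x K ext_presentation) with ext_x.
  fold n x rels. unfold ext_rels. rewrite !map_app, !sumR_app, !map_map.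
  assert (A1 : (fold_right Rplus 0 (map (fun p => recip_order K (evalw K ext_x (fst p))) rels)
             <= fold_right Rplus 0 (map (fun p => recip_order G (evalw G x (fst p))) rels))%R).
  { apply sumR_le. intros p hp. destruct (pr_rel_RK_order G Q p hp) as [kk hkk]. fold x in hkk.
    destruct (pr_rels_spec G Q p hp) as [h1 _].
    rewrite (recip_order_eq G _ kk hkk). unfold K. rewrite evalw_quotient, evalw_ext_x_old; auto.
    apply (recip_order_quotient_le G S HS N); auto; [destruct hkk; lia | exact (Hold p hp kk hkk)]. }
  assert (A2 : (fold_right Rplus 0
                 (map (fun i => recip_order K (evalw K ext_x (fst (tie_rel i)))) (seq 0 m))
             = fold_right Rplus 0 (map (fun _ => 1%R) (seq 0 m)))%R).
  { apply f_equal, map_ext. intro i. apply recip_order_gid. unfold K. rewrite evalw_quotient.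
    apply (geq_qeq _ _ HS). apply evalw_tie_word. }
  assert (A3 : (fold_right Rplus 0
                 (map (fun i => recip_order K (evalw K ext_x (fst (power_rel i)))) (seq 0 m))
             <= fold_right Rplus 0 (map (fun _ => / INR M) (seq 0 m)))%R).
  { apply sumR_le. intros i hi. apply in_seq in hi. unfold K. rewrite evalw_quotient.
    apply (recip_order_quotient_le G S HS N); auto. intros j hj hNj.
    apply (Hnew (new_gen i) (new_gen_in i ltac:(lia)) j hj).
    eapply (sg_resp _ _ (fi_sg _ _ HN)); [|exact hNj]. apply gpow_compat.
    cbn [power_rel fst evalw fold_right]. unfold eval_letter; simpl.
    rewrite ext_x_new. apply gop_id_r. }
  rewrite A2, !sumR_const, length_seq in *. unfold ext_n. rewrite plus_INR. lra.
Qed.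
End ExtendedPresentation.

(** * Choosing k *)

Lemma rdefQ_le_rdef (K : Group) (Q : presentation K) : Rbar_le (rdefQ K Q) (rdef K).
Proof. apply (proj1 (Lub_Rbar_correct _)). eexists; reflexivity. Qed.

Lemma rdef_gt_presentation (K : Group) (a : R) :
  Rbar_lt a (rdef K) -> exists Q : presentation K, a < rdefQ K Q.
Proof.
  intro H. apply NNPP. intro no. apply (Rbar_lt_not_le _ _ H).
  apply (proj2 (Lub_Rbar_correct _)). intros r [Q ->]. simpl.
  apply Rnot_lt_le. intro h; apply no; eauto.
Qed.

Lemma exists_small_ratio (m : nat) (eps : R) : 0 < eps ->
  exists M, (1 <= M)%nat /\ INR m * / INR M < eps.
Proof.
  intro heps. assert (hm : 0 <= INR m) by apply pos_INR.
  destruct (archimed_cor1 (eps / (INR m + 1))) as [M [hM1 hM2]];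
    [apply Rdiv_lt_0_compat; lra|].
  exists M. split; [lia|].
  assert (0 < / INR M) by (apply Rinv_0_lt_compat, lt_0_INR; lia).
  apply Rle_lt_trans with ((INR m + 1) * / INR M); [nra|].
  apply Rlt_le_trans with ((INR m + 1) * (eps / (INR m + 1))); [apply Rmult_lt_compat_l; lra|].
  right; field; lra.
Qed.

Lemma filter_list_prop {A} (P : A -> Prop) (l : list A) :
  exists l', forall a, In a l' <-> In a l /\ P a.
Proof.
  induction l as [|b l [l' IH]]; [exists []; simpl; tauto|].
  destruct (classic (P b)) as [Pb|nPb]; [exists (b :: l') | exists l']; intro a; simpl;
    rewrite IH; split; intuition congruence.
Qed.

Lemma common_multiple {A} (l : list A) (P : A -> nat -> Prop) :
  (forall a t c, P a t -> P a (t * c)%nat) ->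
  (forall a, In a l -> exists t, (1 <= t)%nat /\ P a t) ->
  exists T, (1 <= T)%nat /\ forall a, In a l -> P a T.
Proof.
  intros Hc. induction l as [|b l IH]; intro Hl; [exists 1%nat; split; auto; intros a []|].
  destruct IH as [T [hT HT]]; [intros; apply Hl; simpl; auto|].
  destruct (Hl b (or_introl eq_refl)) as [t [ht Ht]].
  exists (t * T)%nat. split; [nia|]. intros a [<-|ha]; [apply Hc; auto|].
  rewrite Nat.mul_comm. apply Hc; auto.
Qed.

Definition infinite_order (G : Group) (g : G) : Prop :=
  forall j, (1 <= j)%nat -> ~ geq (gpow g j) (gid G).

Lemma avoiding_normal_subgroup (G : Group) (Q : presentation G) (gs_inf : list G) (M : nat) :
  residually_finite G -> (forall g, In g gs_inf -> infinite_order G g) ->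
  exists N, normal_subgroup G N /\ finite_index G N /\
    (forall p, In p (pr_rels G Q) -> forall kk,
       is_RK_order G (evalw G (pr_x G Q) (fst p)) kk ->
       forall j, (1 <= j < kk)%nat -> ~ N (gpow (evalw G (pr_x G Q) (fst p)) j)) /\
    (forall g, In g gs_inf -> forall j, (1 <= j < M)%nat -> ~ N (gpow g j)).
Proof.
  intros Hrf Hinf.
  set (u := fun p : word * nat => evalw G (pr_x G Q) (fst p)).
  set (old := fun p y => exists kk j, is_RK_order G (u p) kk /\ (1 <= j < kk)%nat /\
                                     y = gpow (u p) j).
  set (new := fun (g : G) y => exists j, (1 <= j < M)%nat /\ y = gpow g j).
  assert (AV : avoidable G (fun y => (exists p, In p (pr_rels G Q) /\ old p y) \/
                                     (exists g, In g gs_inf /\ new g y))).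
  { apply avoidable_or; apply avoidable_ex_list.
    - intros p hp. destruct (pr_rel_RK_order G Q p hp) as [kk hkk].
      eapply avoidable_weaken; [|apply (avoidable_powers G (u p) kk)].
      + intros y [kk' [j [h1 [h2 h3]]]]. rewrite (is_RK_order_unique G _ _ _ h1 hkk) in h2. eauto.
      + intros i hi. destruct hkk as [_ [_ h]]. apply h; auto.
    - intros g hg. apply avoidable_powers. intros i hi Hr.
      destruct (Hrf (gpow g i)) as [H [F nH]]; [apply Hinf; auto; lia|].
      exact (nH (Hr H F)). }
  destruct (avoidable_normal G _ AV) as [N [NN [FN AN]]].
  exists N. split; [exact NN | split; [exact FN | split]].
  - intros p hp kk hkk j hj hNj. apply (AN _ (or_introl (ex_intro _ p (conj hp
      (ex_intro _ kk (ex_intro _ j (conj hkk (conj hj eq_refl)))))))), hNj.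
  - intros g hg j hj hNj. apply (AN _ (or_intror (ex_intro _ g (conj hg
      (ex_intro _ j (conj hj eq_refl)))))), hNj.
Qed.

Lemma exists_good_exponent (G : Group) (N : G -> Prop) (gs gs_inf : list G) :
  finite_index G N -> (forall g, In g gs -> ~ In g gs_inf -> ~ infinite_order G g) ->
  exists T, (1 <= T)%nat /\ forall g c, In g gs ->
    N (gpow g (T * c)) /\ (~ In g gs_inf -> geq (gpow g (T * c)) (gid G)).
Proof.
  intros FN Htor.
  set (P := fun g t => forall c, N (gpow g (t * c)) /\
                                 (~ In g gs_inf -> geq (gpow g (t * c)) (gid G))).
  destruct (common_multiple gs P) as [T [hT HT]].
  - intros g t c h c'. rewrite <- Nat.mul_assoc. apply h.
  - intros g hg. assert (SN := fi_sg _ _ FN).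
    assert (Hpow : forall t, geq (gpow g t) (gid G) -> P g t).
    { intros t E c.
      assert (E' : geq (gpow g (t * c)) (gid G))
        by (rewrite gpow_mul, (gpow_compat _ _ _ c E); apply gpow_gid).
      split; [apply (sg_geq_gid _ _ SN _ E') | intros; exact E']. }
    destruct (classic (In g gs_inf)) as [hI|nI].
    + destruct (fi_exponent G N g FN) as [e [he1 he2]]. exists e. split; [exact he1|].
      intro c. split; [|tauto].
      apply (sg_resp _ _ SN (gpow (gpow g e) c)); [symmetry; apply gpow_mul|].
      apply (sg_gpow _ _ SN), he2.
    + destruct (not_all_ex_not _ _ (Htor g hg nI)) as [j hj].
      apply imply_to_and in hj as [hj1 hj2]. apply NNPP in hj2.
      exists j. split; [exact hj1 | apply Hpow, hj2].
  - exists T. split; [exact hT|]. intros g c hg. apply HT, hg.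
Qed.

Theorem mainTheorem18 (G : Group) (gs : list G)
  (Hfp : finitely_presented G) (Hrf : residually_finite G)
  (Hnt : Forall (fun g => ~ geq g (gid G)) gs)
  (Hdef : Rbar_lt (Finite 1) (rdef G)) :
  forall k0 : nat, exists k : nat, (k0 <= k)%nat /\
    Rbar_lt (Finite 1) (rdef (quotient G (Hk G gs k) (Hk_normal G gs k))).
Proof.
  intro k0.
  destruct (rdef_gt_presentation G 1 Hdef) as [Q hQ].
  destruct (filter_list_prop (infinite_order G) gs) as [gs_inf Hinf].
  destruct (exists_small_ratio (length gs_inf) (rdefQ G Q - 1)) as [M [hM hsmall]]; [lra|].
  destruct (avoiding_normal_subgroup G Q gs_inf M Hrf) as [N [NN [FN [Hold Hnew]]]];
    [intros g hg; apply Hinf, hg|].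
  destruct (exists_good_exponent G N gs gs_inf FN) as [T [hT HT]];
    [intros g hg nI hi; apply nI, Hinf; auto|].
  set (k := (T * S k0)%nat).
  assert (k_pos : (1 <= k)%nat) by (unfold k; nia).
  assert (gs_inf_sub : forall g, In g gs_inf -> In g gs) by (intros g hg; apply Hinf, hg).
  assert (gs_torsion : forall g, In g gs -> ~ In g gs_inf -> geq (gpow g k) (gid G))
    by (intros g hg; apply (HT g (S k0) hg)).
  assert (Hk_sub : forall y, Hk G gs k y -> N y)
    by (intros y hy; apply hy; [exact NN | intros s [g [hg ->]]; apply (HT g (S k0) hg)]).
  exists k. split; [unfold k; nia|].
  pose proof (rdefQ_ext_presentation_ge G Q gs gs_inf k gs_inf_sub gs_torsion k_pos
                N M FN Hk_sub hM Hold Hnew) as B.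
  eapply Rbar_lt_le_trans;
    [|apply (rdefQ_le_rdef _ (ext_presentation G Q gs gs_inf k gs_inf_sub gs_torsion k_pos))].
  simpl. lra.
Qed.
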